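(* Let $L>0,\alpha>0$. For $\lambda>0$ and $b\in\Lambda(\alpha)$, it holds that $\mu(\lambda,b)\ge\mu(0,b)$.
   Context: $\Lambda(\alpha)$: $b\in C^1(\mathbb R)$, $b\ge0$, $L$-periodic, $\int_0^Lb=\alpha L$. For $\lambda\in\mathbb R$, $\mu(\lambda,b)$ denotes the principal eigenvalue of $-\psi''+2\lambda\psi'-b\psi=\mu\psi$ with $\psi$ positive and $L$-periodic, i.e. the eigenvalue having a positive $L$-periodic eigenfunction. *)

From Stdlib Require Import Reals.
From Coquelicot Require Import Coquelicot.
Open Scope R_scope.

Definition periodic (L : R) (f : R -> R) : Prop := forall x, f (x + L) = f x.

Definition C1 (b : R -> R) : Prop :=
  forall x, ex_derive b x /\ continuous (Derive b) x.

Definition in_Lambda (L alpha : R) (b : R -> R) : Prop :=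
  C1 b /\ (forall x, 0 <= b x) /\ periodic L b /\ RInt b 0 L = alpha * L.

(* mu is the principal eigenvalue of  -psi'' + 2 lam psi' - b psi = mu psi,
   i.e. the eigenvalue having a positive L-periodic (twice differentiable)
   eigenfunction psi. *)
Definition is_principal_eigenvalue (L lam : R) (b : R -> R) (mu : R) : Prop :=
  exists psi dpsi ddpsi : R -> R,
    (forall x, is_derive psi x (dpsi x)) /\
    (forall x, is_derive dpsi x (ddpsi x)) /\
    periodic L psi /\
    (forall x, 0 < psi x) /\
    (forall x, - ddpsi x + 2 * lam * dpsi x - b x * psi x = mu * psi x).

(** Let ψ > 0 solve the λ-problem with eigenvalue μ_λ and φ > 0 the 0-problem
    with eigenvalue μ_0, and let w = φ'/φ, which solves the Riccati equation
    w' = -b - μ_0 - w².  The Picone-type function K = ψ² w - ψ ψ' + λ ψ² is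
    L-periodic and satisfies K' = (μ_λ - μ_0) ψ² - (ψ' - w ψ)².  A periodic
    function has a critical point c, where (μ_λ - μ_0) ψ(c)² is a square, so
    μ_λ >= μ_0.  The argument works for every real λ and every function b. *)

From Stdlib Require Import Reals Lra.
From Coquelicot Require Import Coquelicot.
Open Scope R_scope.

Lemma is_derive_Rmult (f g : R -> R) (x df dg : R) :
  is_derive f x df -> is_derive g x dg ->
  is_derive (fun t => f t * g t) x (df * g x + f x * dg).
Proof. intros Hf Hg. apply (is_derive_mult f g); auto. intros; apply Rmult_comm. Qed.

Lemma is_derive_eq (f : R -> R) (x l l' : R) : is_derive f x l -> l = l' -> is_derive f x l'.
Proof. intros H <-; exact H. Qed.

Lemma periodic_derive L (f df : R -> R) :
  (forall x, is_derive f x (df x)) -> periodic L f -> periodic L df.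
Proof.
  intros Hf Hper x.
  assert (Hshift : is_derive (fun y => f (y + L)) x (df (x + L))).
  { apply (is_derive_eq _ _ (scal 1 (df (x + L)))).
    - apply (is_derive_comp f (fun y => y + L) x (df (x + L)) 1); [apply Hf |].
      auto_derive; [exact I | ring].
    - unfold scal; simpl; unfold mult; simpl; ring. }
  apply (is_derive_ext _ f) in Hshift; [| intro; apply Hper].
  rewrite <- (is_derive_unique _ _ _ Hshift); apply is_derive_unique, Hf.
Qed.

Lemma periodic_critical_point L (f df : R -> R) :
  0 < L -> (forall x, is_derive f x (df x)) -> periodic L f ->
  exists c, df c = 0.
Proof.
  intros HL Hf Hper.
  destruct (MVT_gen f 0 L df) as [c [_ Hc]].
  - intros x _; apply Hf.
  - intros x _. apply continuity_pt_filterlim, (ex_derive_continuous f x).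
    exists (df x); apply Hf.
  - exists c.
    assert (Hf0 : f L = f 0) by (rewrite <- (Rplus_0_l L); apply Hper).
    rewrite Hf0 in Hc; nra.
Qed.

Definition log_derivative (phi dphi : R -> R) (x : R) : R := dphi x / phi x.

Lemma is_derive_log_derivative (phi dphi ddphi : R -> R) x :
  is_derive phi x (dphi x) -> is_derive dphi x (ddphi x) -> phi x <> 0 ->
  is_derive (log_derivative phi dphi) x
    (ddphi x / phi x - log_derivative phi dphi x * log_derivative phi dphi x).
Proof.
  intros Hphi Hdphi Hnz.
  eapply is_derive_eq.
  - apply is_derive_Rmult; [exact Hdphi | apply is_derive_inv; [exact Hphi | exact Hnz]].
  - unfold log_derivative; field; exact Hnz.
Qed.

Definition picone (lam : R) (psi dpsi w : R -> R) (x : R) : R :=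
  psi x * psi x * w x - psi x * dpsi x + lam * (psi x * psi x).

Section PiconeIdentity.

Variables (lam mu_lam mu_0 : R) (b psi dpsi ddpsi w : R -> R).

Hypothesis psi_derive : forall x, is_derive psi x (dpsi x).
Hypothesis dpsi_derive : forall x, is_derive dpsi x (ddpsi x).
Hypothesis psi_eigen :
  forall x, - ddpsi x + 2 * lam * dpsi x - b x * psi x = mu_lam * psi x.
Hypothesis w_riccati : forall x, is_derive w x (- b x - mu_0 - w x * w x).

Lemma is_derive_picone x :
  is_derive (picone lam psi dpsi w) x
    ((mu_lam - mu_0) * (psi x * psi x) - (dpsi x - w x * psi x) ^ 2).
Proof.
  pose proof (is_derive_Rmult _ _ _ _ _ (psi_derive x) (psi_derive x)) as Hpsi2.
  eapply is_derive_eq.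
  - apply (is_derive_plus (fun t => psi t * psi t * w t - psi t * dpsi t)
      (fun t => lam * (psi t * psi t))).
    + apply (is_derive_minus (fun t => psi t * psi t * w t) (fun t => psi t * dpsi t)).
      * exact (is_derive_Rmult (fun t => psi t * psi t) w _ _ _ Hpsi2 (w_riccati x)).
      * exact (is_derive_Rmult _ _ _ _ _ (psi_derive x) (dpsi_derive x)).
    + exact (is_derive_scal _ _ lam _ Hpsi2).
  - assert (Hdd : ddpsi x = 2 * lam * dpsi x - b x * psi x - mu_lam * psi x)
      by (pose proof (psi_eigen x); lra).
    unfold minus, opp; simpl; unfold plus; simpl. rewrite Hdd; ring.
Qed.

End PiconeIdentity.

Theorem mainTheorem15 (L alpha lam : R) (b : R -> R) (mu_lam mu_0 : R) :
  0 < L -> 0 < alpha -> 0 < lam ->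
  in_Lambda L alpha b ->
  is_principal_eigenvalue L lam b mu_lam ->
  is_principal_eigenvalue L 0 b mu_0 ->
  mu_lam >= mu_0.
Proof.
  intros HL _ _ _ [psi [dpsi [ddpsi [Hpsi [Hdpsi [Hpsi_per [Hpsi_pos Hpsi_eq]]]]]]]
    [phi [dphi [ddphi [Hphi [Hdphi [Hphi_per [Hphi_pos Hphi_eq]]]]]]].
  set (w := log_derivative phi dphi).
  assert (Hw : forall x, is_derive w x (- b x - mu_0 - w x * w x)).
  { intro x. pose proof (Hphi_pos x) as Hphi_x.
    assert (Hdd : ddphi x = - (b x + mu_0) * phi x) by (pose proof (Hphi_eq x); lra).
    eapply is_derive_eq.
    - apply (is_derive_log_derivative phi dphi ddphi); auto; lra.
    - fold w. rewrite Hdd. field. lra. }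
  pose proof (is_derive_picone lam mu_lam mu_0 b psi dpsi ddpsi w
    Hpsi Hdpsi Hpsi_eq Hw) as HK.
  assert (HK_per : periodic L (picone lam psi dpsi w)).
  { intro x; unfold picone, w, log_derivative.
    rewrite Hpsi_per, Hphi_per, (periodic_derive L psi dpsi Hpsi Hpsi_per),
      (periodic_derive L phi dphi Hphi Hphi_per); reflexivity. }
  destruct (periodic_critical_point L _ _ HL HK HK_per) as [c Hc].
  assert (Hpsi2 : 0 < psi c * psi c) by (pose proof (Hpsi_pos c); nra).
  pose proof (pow2_ge_0 (dpsi c - w c * psi c)).
  apply Rle_ge; nra.
Qed.
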